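(* Let $n$ be a positive integer and $0<\phi<\infty$. For integers $r,k\ge 0$ with $k+r\le n$ define $$L(r,k) = \log\binom{n}{k+r} + (n-k-r)\log\phi + \log S(k+r,k),$$ with $\log 0 = -\infty$. Then $L(0,0)=n\log\phi$; $L(r,0)=-\infty$ for $1\le r\le n$; $L(0,k)=\log\binom{n}{k}+(n-k)\log\phi$ for $0\le k\le n$; and for all integers $r\ge1$, $k\ge1$ with $k+r\le n$, $$L(r,k) = \log(n-k-r+1) - \log(k+r) - \log\phi + \mathrm{logsumexp}\big(\log k + L(r-1,k),\ L(r,k-1)\big).$$ Furthermore, for $0\le k\le n$ and $0\le r\le n-k$, $$\log \mathrm{Spillage}(r\mid n,k,\phi) = L(r,k) - \mathrm{logsumexp}\big(L(0,k),\dots,L(n-k,k)\big).$$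
   Context: $S(j,k)$ denotes the (central) Stirling numbers of the second kind (with $S(0,0)=1$, $S(j,0)=0$ for $j\ge1$). $\mathrm{logsumexp}(a_1,\dots,a_p) = \log\sum_{i=1}^p e^{a_i}$, with $e^{-\infty}=0$. The noncentral Stirling numbers of the second kind are $S(n,k,\phi) = \sum_{r=0}^{n-k}\binom{n}{k+r}\phi^{n-k-r}S(k+r,k)$, and the spillage mass function is $\mathrm{Spillage}(r\mid n,k,\phi) = \binom{n}{k+r}\phi^{n-k-r}S(k+r,k)/S(n,k,\phi)$ for $r=0,\dots,n-k$. *)

From mathcomp Require Import all_boot all_order all_algebra.
From mathcomp Require Import all_classical all_reals.
From mathcomp Require Import ereal topology normedtype sequences exp.
Set Implicit Arguments. Unset Strict Implicit. Unset Printing Implicit Defensive.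
Import Order.TTheory GRing.Theory Num.Theory.
Local Open Scope ring_scope.

Fixpoint stirling2 (j k : nat) : nat :=
  match j, k with
  | 0, 0 => 1
  | 0, _.+1 => 0
  | _.+1, 0 => 0
  | j'.+1, k'.+1 => (k'.+1 * stirling2 j' k + stirling2 j' k')%N
  end.

Definition elog {R : realType} (x : R) : \bar R :=
  if 0 < x then (ln x)%:E else -oo%E.

(* exp on the extended reals with e^{-oo} = 0 (value at +oo irrelevant) *)
Definition eexp {R : realType} (a : \bar R) : R :=
  match a with
  | EFin r => expR r
  | _ => 0
  end.

Definition logsumexp {R : realType} (s : seq (\bar R)) : \bar R :=
  elog (\sum_(a <- s) eexp a).

Definition ncstirling2 {R : realType} (n k : nat) (phi : R) : R :=
  \sum_(0 <= r < (n - k).+1)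
     'C(n, k + r)%:R * phi ^+ (n - k - r) * (stirling2 (k + r) k)%:R.

Definition spillage {R : realType} (n k : nat) (phi : R) (r : nat) : R :=
  'C(n, k + r)%:R * phi ^+ (n - k - r) * (stirling2 (k + r) k)%:R
  / ncstirling2 n k phi.

Definition Lfun {R : realType} (n : nat) (phi : R) (r k : nat) : \bar R :=
  (elog ('C(n, k + r)%:R : R) + ((n - k - r)%:R * ln phi)%:E
   + elog ((stirling2 (k + r) k)%:R : R))%E.

From mathcomp Require Import all_boot all_order all_algebra.
From mathcomp Require Import all_classical all_reals.
From mathcomp Require Import ereal topology normedtype sequences exp.
From mathcomp Require Import ring zify.
Import Order.TTheory GRing.Theory Num.Theory.
Local Open Scope ring_scope.

(* L(r,k) is the extended logarithm of the summand
   t(r,k) = C(n,k+r) phi^(n-k-r) S(k+r,k) of S(n,k,phi).  The recurrence is the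
   logarithm of an identity between summands, obtained by combining the Stirling
   recurrence S(j+1,k) = k S(j,k) + S(j,k-1) with
   (j+1) C(n,j+1) = (n-j) C(n,j); the spillage formula is the logarithm of
   t(r,k) / sum_i t(i,k), where the sum is positive because t(0,k) > 0. *)

Lemma stirling2_small j k : (j < k)%N -> stirling2 j k = 0%N.
Proof.
elim: j k => [|j IHj] [|k] // ltjk.
by rewrite /= (IHj k.+1 (ltnW ltjk)) (IHj k ltjk) muln0.
Qed.

Lemma stirling2_diag k : stirling2 k k = 1%N.
Proof. by elim: k => //= k ->; rewrite stirling2_small // muln0. Qed.

Definition ncstirling2_term {R : pzSemiRingType} (n k : nat) (phi : R) r : R :=
  'C(n, k + r)%:R * phi ^+ (n - k - r) * (stirling2 (k + r) k)%:R.

Lemma ncstirling2_term_rec (R : comPzRingType) (n k r : nat) (phi : R) :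
  (k.+1 + r.+1 <= n)%N ->
  (k.+1 + r.+1)%:R * phi * ncstirling2_term n k.+1 phi r.+1 =
  (n - k.+1 - r.+1).+1%:R *
    (k.+1%:R * ncstirling2_term n k.+1 phi r + ncstirling2_term n k phi r.+1).
Proof.
move=> le_kr_n; set j := (k.+1 + r)%N; rewrite /ncstirling2_term.
have -> : (k.+1 + r.+1 = j.+1)%N by rewrite /j addnS.
have -> : (k + r.+1 = j)%N by rewrite /j addnS.
have -> : (n - k.+1 - r.+1).+1 = (n - j)%N by rewrite /j; lia.
have -> : (n - k - r.+1 = n - j)%N by rewrite /j; lia.
have -> : (n - k.+1 - r.+1 = n - j.+1)%N by rewrite /j; lia.
have -> : (n - k.+1 - r = n - j)%N by rewrite /j; lia.
have phi_split : phi ^+ (n - j) = phi * phi ^+ (n - j.+1).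
  by rewrite -exprS; congr (_ ^+ _); rewrite /j; lia.
have bin_step : j.+1%:R * 'C(n, j.+1)%:R = (n - j)%:R * 'C(n, j)%:R :> R.
  by rewrite -!natrM mul_bin_left.
have stirling_step : stirling2 j.+1 k.+1 = (k.+1 * stirling2 j k.+1 + stirling2 j k)%N
  by [].
rewrite phi_split stirling_step natrD natrM.
transitivity ((j.+1%:R * 'C(n, j.+1)%:R) * (phi * phi ^+ (n - j.+1)) *
  (k.+1%:R * (stirling2 j k.+1)%:R + (stirling2 j k)%:R)); first by ring.
by rewrite bin_step; ring.
Qed.

Section ExtendedLog.
Context {R : realType}.
Implicit Types a b : R.

Lemma elog_gt0 {a} : 0 < a -> elog a = (ln a)%:E.
Proof. by rewrite /elog => ->. Qed.

Lemma elog0 : elog (0 : R) = -oo%E.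
Proof. by rewrite /elog ltxx. Qed.

Lemma elog1 : elog (1 : R) = 0%E.
Proof. by rewrite elog_gt0 // ln1. Qed.

Lemma elogM a b : 0 <= a -> 0 <= b -> elog (a * b) = (elog a + elog b)%E.
Proof.
rewrite le_eqVlt => /predU1P [<-|a_gt0]; first by rewrite mul0r elog0.
rewrite le_eqVlt => /predU1P [<-|b_gt0]; first by rewrite mulr0 elog0 addeNy.
by rewrite !elog_gt0 ?mulr_gt0 // lnM.
Qed.

Lemma elogMV a b : 0 <= a -> 0 < b -> elog (a / b) = (elog a - elog b)%E.
Proof.
move=> a_ge0 b_gt0; rewrite elogM ?invr_ge0 ?(ltW b_gt0) //.
have binv_gt0 : 0 < b^-1 by rewrite invr_gt0.
by rewrite (elog_gt0 b_gt0) (elog_gt0 binv_gt0) lnV ?posrE.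
Qed.

Lemma elogXn a m : 0 < a -> elog (a ^+ m) = (m%:R * ln a)%:E.
Proof. by move=> a_gt0; rewrite elog_gt0 ?exprn_gt0 // lnXn // mulr_natl. Qed.

Lemma elogK a : 0 <= a -> eexp (elog a) = a.
Proof.
rewrite le_eqVlt => /predU1P [<-|a_gt0]; first by rewrite elog0.
by rewrite elog_gt0 //= lnK.
Qed.

Lemma logsumexp_elog (s : seq R) : all (>= 0) s ->
  logsumexp [seq elog a | a <- s] = elog (\sum_(a <- s) a).
Proof.
rewrite /logsumexp big_map => s_ge0; congr elog.
elim: s s_ge0 => [|a s IHs] /=; first by rewrite !big_nil.
by case/andP=> a_ge0 s_ge0; rewrite !big_cons IHs // elogK.
Qed.

End ExtendedLog.

Section LogSpillage.
Variables (R : realType) (n : nat) (phi : R).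
Hypothesis phi_gt0 : 0 < phi.

Lemma ncstirling2_term_ge0 k r : 0 <= ncstirling2_term n k phi r.
Proof. by rewrite /ncstirling2_term !mulr_ge0 ?exprn_ge0 ?(ltW phi_gt0). Qed.

Lemma ncstirling2_term0_gt0 k : (k <= n)%N -> 0 < ncstirling2_term n k phi 0.
Proof.
move=> le_kn; rewrite /ncstirling2_term addn0 stirling2_diag mulr1.
by rewrite mulr_gt0 ?exprn_gt0 // ltr0n bin_gt0.
Qed.

Lemma LfunE r k : Lfun n phi r k = elog (ncstirling2_term n k phi r).
Proof.
rewrite /Lfun /ncstirling2_term !elogM ?mulr_ge0 ?exprn_ge0 ?(ltW phi_gt0) //.
by rewrite elogXn.
Qed.

Lemma ncstirling2_gt0 k : (k <= n)%N -> 0 < ncstirling2 n k phi.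
Proof.
move=> le_kn; rewrite /ncstirling2 big_nat_recl //.
rewrite ltr_pwDl ?sumr_ge0 //; first exact: ncstirling2_term0_gt0.
by move=> i _; apply: ncstirling2_term_ge0.
Qed.

Lemma Lfun_rec r k : (k.+1 + r.+1 <= n)%N ->
  Lfun n phi r.+1 k.+1 =
    (elog ((n - k.+1 - r.+1 + 1)%:R : R) - elog ((k.+1 + r.+1)%:R : R)
     - (ln phi)%:E
     + logsumexp [:: elog (k.+1%:R : R) + Lfun n phi r k.+1; Lfun n phi r.+1 k])%E.
Proof.
move=> le_kr_n; have t_ge0 := ncstirling2_term_ge0.
pose s := k.+1%:R * ncstirling2_term n k.+1 phi r + ncstirling2_term n k phi r.+1.
have s_ge0 : 0 <= s by rewrite /s addr_ge0 ?t_ge0 // mulr_ge0 ?t_ge0.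
have logsumexp_s :
    logsumexp [:: elog (k.+1%:R : R) + Lfun n phi r k.+1; Lfun n phi r.+1 k] = elog s.
  rewrite !LfunE -elogM // (logsumexp_elog [:: _ * _; _]).
    by rewrite !big_cons big_nil addr0.
  by rewrite /= t_ge0 mulr_ge0 ?t_ge0.
rewrite logsumexp_s LfunE addn1.
have -> : ncstirling2_term n k.+1 phi r.+1 =
    (n - k.+1 - r.+1).+1%:R / (k.+1 + r.+1)%:R / phi * s.
  have phi_neq0 : phi != 0 by rewrite gt_eqF.
  have kr_neq0 : (k.+1 + r.+1)%:R != 0 :> R by rewrite pnatr_eq0.
  have := @ncstirling2_term_rec R n k r phi le_kr_n; rewrite -/s.
  move: (ncstirling2_term n k.+1 phi r.+1) ((n - k.+1 - r.+1).+1%:R : R)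
    ((k.+1 + r.+1)%:R : R) kr_neq0 => t m j j_neq0 rec_t.
  clearbody s; apply: (mulfI (mulf_neq0 j_neq0 phi_neq0)); rewrite rec_t.
  by field; rewrite j_neq0 phi_neq0.
rewrite elogM ?divr_ge0 ?(ltW phi_gt0) //.
by rewrite !elogMV ?divr_ge0 // (elog_gt0 phi_gt0).
Qed.

Lemma elog_spillage k r : (k <= n)%N ->
  elog (spillage n k phi r) =
    (Lfun n phi r k - logsumexp [seq Lfun n phi i k | i <- iota 0 (n - k).+1])%E.
Proof.
move=> le_kn; rewrite (eq_map (fun i => LfunE i k)) map_comp logsumexp_elog.
- by rewrite big_map LfunE -elogMV ?ncstirling2_term_ge0 ?ncstirling2_gt0.
- by apply/allP => _ /mapP [i _ ->]; apply: ncstirling2_term_ge0.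
Qed.

End LogSpillage.

Theorem theorem5 (R : realType) (n : nat) (phi : R) :
  (0 < n)%N -> 0 < phi ->
  [/\ Lfun n phi 0 0 = (n%:R * ln phi)%:E,
      (forall r : nat, (1 <= r <= n)%N -> Lfun n phi r 0 = -oo%E),
      (forall k : nat, (k <= n)%N ->
         Lfun n phi 0 k = (elog ('C(n, k)%:R : R) + ((n - k)%:R * ln phi)%:E)%E),
      (forall r k : nat, (1 <= r)%N -> (1 <= k)%N -> (k + r <= n)%N ->
         Lfun n phi r k =
           (elog ((n - k - r + 1)%:R : R) - elog ((k + r)%:R : R) - (ln phi)%:E
            + logsumexp [:: elog (k%:R : R) + Lfun n phi r.-1 k;
                            Lfun n phi r k.-1])%E)
    & (forall k r : nat, (k <= n)%N -> (r <= n - k)%N ->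
         elog (spillage n k phi r) =
           (Lfun n phi r k
            - logsumexp [seq Lfun n phi i k | i <- iota 0 (n - k).+1])%E)].
Proof.
move=> _ phi_gt0; split.
- by rewrite LfunE // /ncstirling2_term bin0 !subn0 mul1r mulr1 elogXn.
- by move=> [|r] // _; rewrite LfunE // /ncstirling2_term mulr0 elog0.
- by move=> k _; rewrite /Lfun addn0 subn0 stirling2_diag elog1 adde0.
- by move=> [|r] [|k] // _ _; apply: Lfun_rec.
- by move=> k r le_kn _; apply: elog_spillage.
Qed.
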